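(* Let $\mathbf{X}\in\mathbb{R}^{d\times n}$, $\mathbf{W}^\star\in\mathbb{R}^{m\times d}$ and $\mathbf{Y}=\mathbf{W}^\star\mathbf{X}\in\mathbb{R}^{m\times n}$. Let $p=\operatorname{rank}(\mathbf{Y})$ and let $\sigma_1^\star\ge\sigma_2^\star\ge\dots\ge\sigma_p^\star>0$ be the nonzero singular values of $\mathbf{Y}$, with $\sigma_k^\star:=0$ for $k>p$. Let $1\le r\le p$ and let $\{(\mathbf{a}_k,\mathbf{b}_k)\}_{k=1}^r$ be the output of the Inexact Sequential Low-Rank procedure (described in the context) applied to $(\mathbf{X},\mathbf{Y})$ with target rank $r$, and let $\bm{\delta}_k$ be the corresponding numerical errors, with $\|\bm{\delta}_k\|_F>0$ for $k=1,\dots,r$ and the convention $\|\bm{\delta}_0\|_F:=0$. For $1\le k\le r$ define $$\mathcal{T}_k^\star:=\min\Big\{\min_{k<j\le p}|\sigma_k^\star-\sigma_j^\star|,\ \sigma_k^\star\Big\},\qquad E(k):=\sigma_{\max}(\mathbf{X})\sum_{k'=0}^{k-1}\|\bm{\delta}_{k'}\|_F\prod_{j=k'+1}^{k-1}\Big(2+\frac{6\sigma_j^\star}{\mathcal{T}_k^\star}\Big).$$ If $E(k)<\tfrac12\min_{k<j\le p}|\sigma_k^\star-\sigma_j^\star|$ for every $k\in\{1,\dots,r\}$, then $$\Big\|\mathbf{Y}-\sum_{k=1}^r\mathbf{b}_k\mathbf{a}_k^\top\mathbf{X}\Big\|_F\le\sum_{k=r+1}^{p}\sigma_k^\star+\s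igma_{\max}(\mathbf{X})\sum_{k=1}^{r}\sum_{k'=0}^{k}\|\bm{\delta}_{k'}\|_F\prod_{j=k'+1}^{k}\Big(2+\frac{6\sigma_j^\star}{\mathcal{T}_k^\star}\Big).$$
   Context: $\sigma_{\max}(\mathbf{X})$ is the largest singular value of $\mathbf{X}$; $\|\cdot\|_F$ is the Frobenius norm. Inexact Sequential Low-Rank procedure: set $\mathbf{Y}_1:=\mathbf{Y}$; for $k=1,\dots,r$, obtain vectors $\mathbf{a}_k\in\mathbb{R}^d,\mathbf{b}_k\in\mathbb{R}^m$ from an arbitrary (approximate) rank-1 solver applied to $(\mathbf{Y}_k,\mathbf{X})$, and set $\mathbf{Y}_{k+1}:=\mathbf{Y}_k-\mathbf{b}_k\mathbf{a}_k^\top\mathbf{X}$. Numerical error: for each $k$, let $(\overline{\mathbf{a}}_k,\overline{\mathbf{b}}_k)\in\arg\min_{\mathbf{a}\in\mathbb{R}^d,\mathbf{b}\in\mathbb{R}^m}\tfrac12\|\mathbf{Y}_k-\mathbf{b}\mathbf{a}^\top\mathbf{X}\|_F^2$ be an exact minimizer, and $\bm{\delta}_k:=\mathbf{b}_k\mathbf{a}_k^\top-\overline{\mathbf{b}}_k\overline{\mathbf{a}}_k^\top\in\mathbb{R}^{m\times d}$. *)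

From HB Require Import structures.
From mathcomp Require Import all_boot all_order all_algebra.
From mathcomp Require Import reals.
Set Implicit Arguments. Unset Strict Implicit. Unset Printing Implicit Defensive.
Import Order.TTheory GRing.Theory Num.Theory.
Local Open Scope ring_scope.

Section Defs.
Variable R : realType.

Definition frob (m n : nat) (A : 'M[R]_(m, n)) : R :=
  Num.sqrt (\sum_(i < m) \sum_(j < n) A i j ^+ 2).

(* [svals A s]: s 1 >= s 2 >= ... >= 0 are the singular values of A
   (1-indexed, s k = 0 for k > min m n; s 0 is unused), i.e. there is an SVD
   A = U diag(s) V^T with U, V orthogonal. *)
Definition svals (m n : nat) (A : 'M[R]_(m, n)) (s : nat -> R) : Prop :=
  exists (U : 'M[R]_m) (V : 'M[R]_n),
    [/\ U^T *m U = 1%:M, V^T *m V = 1%:M &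
        A = U *m (\matrix_(i < m, j < n) (if (i : nat) == j then s i.+1 else 0))
              *m V^T] /\
    [/\ (forall k, 0 <= s k.+1),
        (forall k, s k.+2 <= s k.+1)
      & (forall k, (minn m n < k)%N -> s k = 0)].

(* Residuals of the sequential procedure: resid k = Y_{k+1}
   (Y_1 = Y, Y_{k+1} = Y_k - b_k a_k^T X). Vectors a, b are 1-indexed. *)
Fixpoint resid (m d n : nat) (Y : 'M[R]_(m, n)) (X : 'M[R]_(d, n))
    (a : nat -> 'cV[R]_d) (b : nat -> 'cV[R]_m) (k : nat) : 'M[R]_(m, n) :=
  match k with
  | 0 => Y
  | k'.+1 => resid Y X a b k' - b k'.+1 *m (a k'.+1)^T *m X
  end.

Definition rank1_argmin (m d n : nat) (Yk : 'M[R]_(m, n)) (X : 'M[R]_(d, n))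
    (a : 'cV[R]_d) (b : 'cV[R]_m) : Prop :=
  forall (a' : 'cV[R]_d) (b' : 'cV[R]_m),
    2^-1 * frob (Yk - b *m a^T *m X) ^+ 2 <= 2^-1 * frob (Yk - b' *m a'^T *m X) ^+ 2.

Definition delta_norm (m d : nat) (a abar : nat -> 'cV[R]_d)
    (b bbar : nat -> 'cV[R]_m) (k : nat) : R :=
  if k == 0%N then 0
  else frob (b k *m (a k)^T - bbar k *m (abar k)^T).

Definition Tstar (s : nat -> R) (p k : nat) : R :=
  \big[Num.min/s k]_(k.+1 <= j < p.+1) `|s k - s j|.

Definition err_sum (dn : nat -> R) (s : nat -> R) (T : R) (K : nat) : R :=
  \sum_(0 <= k' < K) dn k' * \prod_(k'.+1 <= j < K) (2 + 6 * s j / T).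

End Defs.

(* Write Y_k for the residuals and P_Q := 1 - Q Q^T for Q with orthonormal
   columns.  The invariant is that after k steps some Q with r - k columns
   satisfies
     ||P_Q Y_(k+1)||_F <= sum_(j > r) sigma_j + sigma_max(X) sum_(k' <= k) ||delta_k'||_F.
   Initially Q holds the first r left singular vectors of Y.  In a step, a
   Householder rotation of Q splits off a unit column q and leaves columns Q'
   orthogonal to the exact minimizer's b; as Y_k = W_k X, the rank-one matrix
   q q^T Y_k is a feasible candidate, so the exact step does at least as well as
   projecting out q, and the numerical error costs at most sigma_max(X) ||delta_k||_F.
   After r steps Q is empty. *)

From HB Require Import structures.
From mathcomp Require Import all_boot all_order all_algebra.
From mathcomp Require Import reals.
From mathcomp Require Import ring lra.
Set Implicit Arguments. Unset Strict Implicit. Unset Printing Implicit Defensive.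
Import Order.TTheory GRing.Theory Num.Theory.
Local Open Scope ring_scope.

Definition mxdot (R : comPzRingType) m n (A B : 'M[R]_(m, n)) : R := \tr (A^T *m B).

Notation frob2 A := (mxdot A A).

Section FrobeniusInnerProduct.
Variable R : comPzRingType.

Lemma mxdotC m n (A B : 'M[R]_(m, n)) : mxdot A B = mxdot B A.
Proof. by rewrite /mxdot -mxtrace_tr trmx_mul trmxK. Qed.

Lemma mxdotDr m n (A B C : 'M[R]_(m, n)) : mxdot A (B + C) = mxdot A B + mxdot A C.
Proof. by rewrite /mxdot mulmxDr mxtraceD. Qed.

Lemma mxdotZr m n c (A B : 'M[R]_(m, n)) : mxdot A (c *: B) = c * mxdot A B.
Proof. by rewrite /mxdot -scalemxAr mxtraceZ. Qed.

Lemma mxdotDl m n (A B C : 'M[R]_(m, n)) : mxdot (A + B) C = mxdot A C + mxdot B C.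
Proof. by rewrite mxdotC mxdotDr !(mxdotC C). Qed.

Lemma mxdotZl m n c (A B : 'M[R]_(m, n)) : mxdot (c *: A) B = c * mxdot A B.
Proof. by rewrite mxdotC mxdotZr mxdotC. Qed.

Lemma frob2E m n (A : 'M[R]_(m, n)) : frob2 A = \sum_i \sum_j A i j ^+ 2.
Proof.
rewrite exchange_big; apply: eq_bigr => j _; rewrite mxE.
by apply: eq_bigr => i _; rewrite mxE expr2.
Qed.

Lemma frob2D m n (A B : 'M[R]_(m, n)) :
  frob2 (A + B) = frob2 A + 2 * mxdot A B + frob2 B.
Proof. rewrite mxdotDl !mxdotDr (mxdotC B A); ring. Qed.

Lemma mxdot_mulmxl k m n (U : 'M[R]_(k, m)) (A B : 'M[R]_(m, n)) :
  U^T *m U = 1%:M -> mxdot (U *m A) (U *m B) = mxdot A B.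
Proof. by move=> UU; rewrite /mxdot trmx_mul -mulmxA (mulmxA U^T) UU mul1mx. Qed.

Lemma frob2_mulmxr m n k (A : 'M[R]_(m, n)) (W : 'M[R]_(n, k)) :
  W *m W^T = 1%:M -> frob2 (A *m W) = frob2 A.
Proof.
move=> WW; rewrite /mxdot trmx_mul -mulmxA mxtrace_mulC -!mulmxA.
by rewrite WW mulmx1.
Qed.

Lemma frob2_col_mx m1 m2 n (A : 'M[R]_(m1, n)) (B : 'M[R]_(m2, n)) :
  frob2 (col_mx A B) = frob2 A + frob2 B.
Proof. by rewrite /mxdot tr_col_mx mul_row_col mxtraceD. Qed.

Lemma frob2_proj m k n (Q : 'M[R]_(m, k)) (E : 'M[R]_(m, n)) :
  Q^T *m Q = 1%:M -> frob2 ((1%:M - Q *m Q^T) *m E) = frob2 E - frob2 (Q^T *m E).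
Proof.
move=> QQ; set P := Q *m Q^T.
have PP : P *m P = P by rewrite mulmxA -(mulmxA Q) QQ mulmx1.
have PT : P^T = P by rewrite trmx_mul trmxK.
have IP : (1%:M - P)^T *m (1%:M - P) = 1%:M - P.
  by rewrite [(1%:M - P)^T]linearB /= trmx1 PT mulmxBl mul1mx mulmxBr mulmx1 PP subrr subr0.
rewrite /mxdot trmx_mul -mulmxA (mulmxA (1%:M - P)^T) IP mulmxBl mul1mx mulmxBr linearB /=.
by rewrite trmx_mul trmxK !mulmxA.
Qed.

Lemma trmx_mul_cV n (u v : 'cV[R]_n) : u^T *m v = (mxdot u v)%:M.
Proof. by rewrite {1}[u^T *m v]mx11_scalar /mxdot /mxtrace big_ord1. Qed.

End FrobeniusInnerProduct.

Section RealFrobeniusInnerProduct.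
Variable R : realFieldType.

Lemma frob2_ge0 m n (A : 'M[R]_(m, n)) : 0 <= frob2 A.
Proof. by rewrite frob2E; do 2!(apply: sumr_ge0 => ? _); apply: sqr_ge0. Qed.

Lemma frob2_eq0 m n (A : 'M[R]_(m, n)) : (frob2 A == 0) = (A == 0).
Proof.
apply/idP/eqP => [|->]; last by rewrite /mxdot mulmx0 linear0.
rewrite frob2E psumr_eq0 => [/allP A0|i _]; last first.
  by apply: sumr_ge0 => j _; apply: sqr_ge0.
apply/matrixP => i j; apply/eqP; rewrite mxE -sqrf_eq0.
move: (A0 i (mem_index_enum _)); rewrite /= psumr_eq0 => [/allP/(_ j)|]; last first.
  by move=> k _; apply: sqr_ge0.
by apply; apply: mem_index_enum.
Qed.

Lemma mxdot_CauchySchwarz m n (A B : 'M[R]_(m, n)) :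
  mxdot A B ^+ 2 <= frob2 A * frob2 B.
Proof.
have [->|nzB] := eqVneq B 0.
  by rewrite /mxdot !mulmx0 !linear0 expr0n /= mulr0.
have fB_gt0 : 0 < frob2 B by rewrite lt_def frob2_eq0 nzB frob2_ge0.
set t := mxdot A B / frob2 B.
have tfB : t * frob2 B = mxdot A B by rewrite divfK ?gt_eqF.
have := frob2_ge0 (A + (- t) *: B).
rewrite frob2D mxdotZr mxdotZl mxdotZr; nra.
Qed.

Lemma frob2_mul_diag_le m k l (G : 'M[R]_(m, k)) (D : 'M[R]_(k, l)) e c :
  D *m D^T = diag_mx e -> (forall i, e 0 i <= c) -> frob2 (G *m D) <= c * frob2 G.
Proof.
move=> DD le_ec; rewrite /mxdot trmx_mul -mulmxA mxtrace_mulC -!mulmxA DD.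
rewrite mulmxA mul_mx_diag /mxtrace mulr_sumr.
apply: ler_sum => i _; rewrite !mxE mulrC ler_wpM2r //.
by apply: sumr_ge0 => j _; rewrite mxE -expr2 sqr_ge0.
Qed.

(* For [w = 0] the factor [2 / 0] is [0], so [householder 0 = 1%:M]. *)
Definition householder n (w : 'cV[R]_n) : 'M[R]_n :=
  1%:M - (2 / frob2 w) *: (w *m w^T).

Lemma trmx_householder n (w : 'cV[R]_n) : (householder w)^T = householder w.
Proof. by rewrite linearB /= trmx1 linearZ /= trmx_mul trmxK. Qed.

Lemma householder_orthogonal n (w : 'cV[R]_n) :
  (householder w)^T *m householder w = 1%:M.
Proof.
have [w0|nzw] := eqVneq w 0.
  by rewrite /householder w0 mul0mx scaler0 subr0 trmx1 mulmx1.
set c := 2 / frob2 w.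
have cfw : c * c * frob2 w = c + c by rewrite -mulrA divfK ?frob2_eq0 // mulr_natr mulr2n.
have MM : w *m w^T *m (w *m w^T) = frob2 w *: (w *m w^T).
  by rewrite mulmxA -(mulmxA w) trmx_mul_cV mul_mx_scalar scalemxAl.
rewrite trmx_householder /householder -/c mulmxBl mul1mx mulmxBr mulmx1.
rewrite -scalemxAl -scalemxAr MM !scalerA cfw.
by apply/matrixP => i j; rewrite !mxE; ring.
Qed.

Lemma householder_reflect n (x y : 'cV[R]_n) :
  frob2 x = frob2 y -> householder (x - y) *m x = y.
Proof.
move=> fxy; have [<-|nxy] := eqVneq x y.
  by rewrite subrr /householder mul0mx scaler0 subr0 mul1mx.
set w := x - y; have fw0 : frob2 w != 0 by rewrite frob2_eq0 subr_eq0.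
have fw : frob2 w = 2 * mxdot w x.
  by rewrite /w -scaleN1r frob2D !mxdotDl !mxdotZl !mxdotZr (mxdotC y x) fxy; ring.
rewrite /householder mulmxBl mul1mx -scalemxAl -mulmxA trmx_mul_cV mul_mx_scalar scalerA.
have -> : 2 / frob2 w * mxdot w x = 1 by rewrite mulrAC fw divff // -fw.
by rewrite scale1r /w opprB addrC subrK.
Qed.

End RealFrobeniusInnerProduct.

Section OrthonormalSplit.
Variable R : rcfType.

Lemma orthonormal_split m j (Q : 'M[R]_(m, 1 + j)) (v : 'cV[R]_m) :
  Q^T *m Q = 1%:M ->
  exists (q : 'cV[R]_m) (Q' : 'M[R]_(m, j)),
    [/\ q^T *m q = 1%:M, Q'^T *m Q' = 1%:M, Q'^T *m v = 0 &
        forall n (E : 'M[R]_(m, n)),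
          frob2 (Q^T *m E) = frob2 (q^T *m E) + frob2 (Q'^T *m E)].
Proof.
move=> QQ; set x := Q^T *m v.
set y : 'cV[R]_(1 + j) := col_mx (Num.sqrt (frob2 x))%:M 0.
have fxy : frob2 x = frob2 y.
  rewrite frob2_col_mx /mxdot tr_scalar_mx -scalar_mxM mxtrace_scalar mulmx0 linear0.
  by rewrite addr0 -expr2 sqr_sqrtr ?frob2_ge0.
(* [H] sends [Q^T v] to a multiple of the first basis vector, so the last [j]
   columns of [Q *m H] are orthogonal to [v]. *)
set H := householder (x - y).
have HT : H^T = H := trmx_householder _.
have HH : H *m H = 1%:M by rewrite -{1}HT householder_orthogonal.
have Hx : H *m x = y by rewrite householder_reflect.
set QH := Q *m H.
have colE n (E : 'M[R]_(m, n)) :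
    QH^T *m E = col_mx ((lsubmx QH)^T *m E) ((rsubmx QH)^T *m E).
  by rewrite -{1}(hsubmxK QH) tr_row_mx mul_col_mx.
have /eq_block_mx[qq _ _ Q'Q'] :
    block_mx ((lsubmx QH)^T *m lsubmx QH) ((lsubmx QH)^T *m rsubmx QH)
             ((rsubmx QH)^T *m lsubmx QH) ((rsubmx QH)^T *m rsubmx QH)
    = block_mx 1%:M 0 0 1%:M.
  rewrite -mul_col_row -tr_row_mx hsubmxK -scalar_mx_block.
  by rewrite trmx_mul HT mulmxA -(mulmxA H) QQ mulmx1.
exists (lsubmx QH), (rsubmx QH); split=> // [|n E].
  move: (colE _ v); rewrite trmx_mul HT -mulmxA Hx => /(congr1 dsubmx).
  by rewrite !col_mxKd => <-.
by rewrite -frob2_col_mx -colE trmx_mul HT -mulmxA [RHS]mxdot_mulmxl ?HT.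
Qed.

End OrthonormalSplit.

Section RectangularDiagonal.
Variable R : comPzRingType.

(* Entries are read from [s] shifted by one, as for the 1-indexed singular
   values of [svals]. *)
Definition rdiag_mx m n (s : nat -> R) : 'M[R]_(m, n) :=
  \matrix_(i < m, j < n) (if (i : nat) == j then s i.+1 else 0).

Lemma eq_rdiag_mx m n (s t : nat -> R) :
  (forall i, (i < minn m n)%N -> s i.+1 = t i.+1) -> rdiag_mx m n s = rdiag_mx m n t.
Proof.
move=> st; apply/matrixP => i j; rewrite !mxE; case: eqP => // ij.
by rewrite st // leq_min ltn_ord ij ltn_ord.
Qed.

Lemma tr_rdiag_mx m n (s : nat -> R) : (rdiag_mx m n s)^T = rdiag_mx n m s.
Proof. by apply/matrixP => i j; rewrite !mxE eq_sym; case: eqP => // ->. Qed.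

Lemma rdiag_mx_diag n (s : nat -> R) : rdiag_mx n n s = diag_mx (\row_(i < n) s i.+1).
Proof. by apply/matrixP => i j; rewrite !mxE -val_eqE; case: eqP. Qed.

Lemma mul_rdiag_mx m n p (s t : nat -> R) :
  rdiag_mx m n s *m rdiag_mx n p t
  = rdiag_mx m p (fun k => if (k <= n)%N then s k * t k else 0).
Proof.
apply/matrixP => i j; rewrite !mxE.
rewrite (eq_bigr (fun u : 'I_n => if (u : nat) == i
    then (if (i : nat) == j then s i.+1 * t i.+1 else 0) else 0)); last first.
  move=> u _; rewrite !mxE; have [<-|_] := eqVneq (u : nat) i; last by rewrite mul0r.
  by case: eqP; rewrite ?mulr0.
by rewrite -big_mkcond (big_ord1_eq _ (fun=> _)); case: ifP; case: eqP.
Qed.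

Lemma pid_mx_rdiag m n r :
  (minn m n <= r)%N -> pid_mx r = rdiag_mx m n (fun=> 1) :> 'M[R]_(m, n).
Proof.
move=> le_mn_r; apply/matrixP => i j; rewrite !mxE; case: eqP => //= ij.
by rewrite (leq_trans _ le_mn_r) // leq_min ltn_ord ij ltn_ord.
Qed.

End RectangularDiagonal.

Section RealRectangularDiagonal.
Variable R : realFieldType.

Lemma frob2_rdiag_mx m n (s : nat -> R) :
  frob2 (rdiag_mx m n s) = \sum_(i < m | (i < n)%N) s i.+1 ^+ 2.
Proof.
rewrite frob2E [RHS]big_mkcond; apply: eq_bigr => i _.
rewrite (eq_bigr (fun j : 'I_n => if (j : nat) == i then s i.+1 ^+ 2 else 0)).
  by rewrite -big_mkcond (big_ord1_eq _ (fun=> _)).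
by move=> j _; rewrite mxE eq_sym; case: eqP; rewrite ?expr0n.
Qed.

Lemma rdiag_mx_unit n (s : nat -> R) :
  (forall i, (i < n)%N -> s i.+1 != 0) -> rdiag_mx n n s \in unitmx.
Proof.
move=> s_neq0; rewrite rdiag_mx_diag unitmxE det_diag unitfE.
by apply/prodf_neq0 => i _; rewrite mxE s_neq0.
Qed.

End RealRectangularDiagonal.

Section FrobeniusNorm.
Variable R : realType.

Lemma frobE m n (A : 'M[R]_(m, n)) : frob A = Num.sqrt (frob2 A).
Proof. by rewrite /frob frob2E. Qed.

Lemma frob_ge0 m n (A : 'M[R]_(m, n)) : 0 <= frob A.
Proof. by rewrite frobE sqrtr_ge0. Qed.

Lemma frob_sqr m n (A : 'M[R]_(m, n)) : frob A ^+ 2 = frob2 A.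
Proof. by rewrite frobE sqr_sqrtr ?frob2_ge0. Qed.

Lemma ler_frob m n (A B : 'M[R]_(m, n)) : (frob A <= frob B) = (frob2 A <= frob2 B).
Proof. by rewrite !frobE ler_sqrt ?frob2_ge0. Qed.

Lemma frobN m n (A : 'M[R]_(m, n)) : frob (- A) = frob A.
Proof. by rewrite !frobE -scaleN1r mxdotZl mxdotZr mulN1r mulNr mul1r opprK. Qed.

Lemma frobD_le m n (A B : 'M[R]_(m, n)) : frob (A + B) <= frob A + frob B.
Proof.
have CS : mxdot A B <= frob A * frob B.
  rewrite !frobE -sqrtrM ?frob2_ge0 // (le_trans (ler_norm _)) // -sqrtr_sqr.
  by rewrite ler_sqrt ?mulr_ge0 ?frob2_ge0 // mxdot_CauchySchwarz.
rewrite -ler_sqr ?nnegrE ?addr_ge0 ?frob_ge0 // sqrrD !frob_sqr frob2D mulr2n.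
lra.
Qed.

Lemma frob_proj_le m k n (Q : 'M[R]_(m, k)) (E : 'M[R]_(m, n)) :
  Q^T *m Q = 1%:M -> frob ((1%:M - Q *m Q^T) *m E) <= frob E.
Proof. by move=> QQ; rewrite ler_frob frob2_proj // lerBlDr lerDl frob2_ge0. Qed.

End FrobeniusNorm.

Lemma sum_sqr_le_sqr_sum (R : numDomainType) (I : Type) (r : seq I) (P : pred I)
    (F : I -> R) :
  (forall i, P i -> 0 <= F i) ->
  \sum_(i <- r | P i) F i ^+ 2 <= (\sum_(i <- r | P i) F i) ^+ 2.
Proof.
move=> F_ge0; elim: r => [|x r IH]; first by rewrite !big_nil expr0n.
rewrite !big_cons; case: ifP => // Px.
have S_ge0 : 0 <= \sum_(i <- r | P i) F i by apply: sumr_ge0.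
rewrite sqrrD -addrA lerD2l (le_trans IH) // lerDr.
by rewrite mulrn_wge0 // mulr_ge0 // F_ge0.
Qed.

Section SingularValues.
Variable R : realType.
Implicit Types s : nat -> R.

Lemma svals_svd m n (A : 'M[R]_(m, n)) s : svals A s ->
  exists (U : 'M[R]_m) (V : 'M[R]_n),
    [/\ U^T *m U = 1%:M, V^T *m V = 1%:M & A = U *m rdiag_mx m n s *m V^T].
Proof. by case=> U [V [[UU VV AE] _]]; exists U, V. Qed.

Lemma svals_ge0 m n (A : 'M[R]_(m, n)) s k : svals A s -> (0 < k)%N -> 0 <= s k.
Proof. by case=> _ [_ [_ [s_ge0 _ _]]]; case: k. Qed.

Lemma svals_le m n (A : 'M[R]_(m, n)) s i j :
  svals A s -> (0 < i <= j)%N -> s j <= s i.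
Proof.
case=> _ [_ [_ [_ s_mono _]]] /andP[i_gt0 le_ij].
elim: j le_ij => [|j IH]; first by rewrite leqn0 => /eqP->.
rewrite leq_eqVlt => /predU1P[->//|]; rewrite ltnS => le_ij.
apply: le_trans (IH le_ij); case: j le_ij {IH} => [|j _]; last exact: s_mono.
by rewrite leqn0 => /eqP i0; rewrite i0 in i_gt0.
Qed.

Lemma frob_mulmx_le m d n (Z : 'M[R]_(m, d)) (X : 'M[R]_(d, n)) s :
  svals X s -> frob (Z *m X) <= s 1%N * frob Z.
Proof.
move=> Xs; have [U [V [UU VV ->]]] := svals_svd Xs.
have s1_ge0 : 0 <= s 1%N by apply: svals_ge0 Xs _.
have le_frob2 : frob2 (Z *m (U *m rdiag_mx d n s *m V^T)) <= s 1%N ^+ 2 * frob2 Z.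
  rewrite !mulmxA frob2_mulmxr ?trmxK //.
  rewrite -(frob2_mulmxr Z (mulmx1C UU)).
  apply: frob2_mul_diag_le; first by rewrite tr_rdiag_mx mul_rdiag_mx rdiag_mx_diag.
  move=> i; rewrite mxE; case: ifP => _; last exact: sqr_ge0.
  have si_ge0 : 0 <= s i.+1 by apply: svals_ge0 Xs _.
  by rewrite -expr2 ler_sqr ?nnegrE // (svals_le Xs).
rewrite !frobE -[s 1%N]ger0_norm // -sqrtr_sqr -sqrtrM ?sqr_ge0 //.
by rewrite ler_sqrt // mulr_ge0 ?sqr_ge0 ?frob2_ge0.
Qed.

Lemma svals_rank m n (A : 'M[R]_(m, n)) s k :
  svals A s -> (\rank A < k)%N -> s k = 0.
Proof.
move=> As; set p := \rank A => lt_pk.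
suff sp_eq0 : s p.+1 = 0.
  apply/eqP; rewrite eq_le (svals_ge0 As) ?(leq_ltn_trans _ lt_pk) // andbT.
  by rewrite -sp_eq0 (svals_le As).
apply/eqP/negP => /negP sp_neq0.
have le_pmn : (p.+1 <= minn m n)%N.
  by case: (As) => _ [_ [_ [_ _ s_zero]]]; rewrite leqNgt; apply: contra sp_neq0 => /s_zero->.
have [U [V [UU VV AE]]] := svals_svd As.
have DE : U^T *m A *m V = rdiag_mx m n s.
  by rewrite AE !mulmxA UU mul1mx -mulmxA VV mulmx1.
have compress : pid_mx p.+1 *m (U^T *m A *m V) *m pid_mx p.+1 = rdiag_mx p.+1 p.+1 s.
  rewrite DE !pid_mx_rdiag ?geq_minl ?geq_minr // !mul_rdiag_mx.
  apply: eq_rdiag_mx => i; rewrite minnn => lt_ip.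
  have /andP[le_im le_in] : ((i.+1 <= m) && (i.+1 <= n))%N.
    by rewrite -leq_min (leq_trans lt_ip).
  by rewrite le_im le_in mul1r mulr1.
have D_unit : rdiag_mx p.+1 p.+1 s \in unitmx.
  apply: rdiag_mx_unit => i lt_ip; rewrite gt_eqF // (@lt_le_trans _ _ (s p.+1)) //.
    by rewrite lt_def sp_neq0 (svals_ge0 As).
  exact: svals_le As _.
have : (p.+1 <= p)%N.
  rewrite -{1}(mxrank_unit D_unit) -compress (leq_trans (mxrankM_maxl _ _)) //.
  rewrite (leq_trans (mxrankM_maxr _ _)) // (leq_trans (mxrankM_maxl _ _)) //.
  exact: mxrankM_maxr.
by rewrite ltnn.
Qed.

Lemma svals_tail_proj m n (Y : 'M[R]_(m, n)) s r :
  svals Y s -> (r <= \rank Y)%N ->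
  exists2 Q : 'M[R]_(m, r), Q^T *m Q = 1%:M &
    frob ((1%:M - Q *m Q^T) *m Y) <= \sum_(r.+1 <= k < (\rank Y).+1) s k.
Proof.
move=> Ys; set p := \rank Y => le_rp.
have [U [V [UU VV YE]]] := svals_svd Ys.
have le_pm : (p <= m)%N := rank_leq_row Y.
have le_rm := leq_trans le_rp le_pm.
have frob2_D k : frob2 (rdiag_mx k n s) = \sum_(i < k) s i.+1 ^+ 2.
  rewrite frob2_rdiag_mx big_mkcond; apply: eq_bigr => i _; case: ltnP => // le_ni.
  by rewrite (svals_rank Ys) ?expr0n // ltnS (leq_trans (rank_leq_col Y)).
pose P : 'M[R]_(m, r) := pid_mx r.
have PP : P^T *m P = 1%:M.
  by rewrite tr_pid_mx mul_pid_mx minnn (minn_idPr le_rm) pid_mx_1.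
have QQ : (U *m P)^T *m (U *m P) = 1%:M.
  by rewrite trmx_mul mulmxA -(mulmxA _ U^T) UU mulmx1.
exists (U *m P) => //.
have fY : frob2 Y = \sum_(i < m) s i.+1 ^+ 2.
  by rewrite YE frob2_mulmxr ?trmxK // mxdot_mulmxl // frob2_D.
have fQY : frob2 ((U *m P)^T *m Y) = \sum_(i < r) s i.+1 ^+ 2.
  rewrite YE trmx_mul !mulmxA -(mulmxA _ U^T) UU mulmx1 frob2_mulmxr ?trmxK //.
  rewrite tr_pid_mx pid_mx_rdiag ?geq_minl // mul_rdiag_mx (eq_rdiag_mx (t := s)) ?frob2_D //.
  by move=> i lt_ir; rewrite (leq_trans _ le_rm) ?mul1r // (leq_trans lt_ir) ?geq_minl.
have tail_ge0 : 0 <= \sum_(r.+1 <= k < p.+1) s k.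
  by rewrite big_add1 /=; apply: sumr_ge0 => i _; apply: svals_ge0 Ys _.
rewrite -(ger0_norm tail_ge0) -sqrtr_sqr frobE ler_sqrt ?sqr_ge0 //.
rewrite frob2_proj // fY fQY -!(big_mkord xpredT (fun i => s i.+1 ^+ 2)).
rewrite (@big_cat_nat _ _ _ r) //= addrC addrK.
rewrite (@big_cat_nat _ _ _ p) //= [X in _ + X]big1_seq ?addr0 => [|i /andP[_]].
  by rewrite big_add1 /=; apply: sum_sqr_le_sqr_sum => i _; apply: svals_ge0 Ys _.
by rewrite mem_index_iota => /andP[le_pi _]; rewrite (svals_rank Ys) ?expr0n.
Qed.

End SingularValues.

Section RankOneStep.
Variable R : realType.

Lemma rank1_argmin_frob2 m d n (A : 'M[R]_(m, n)) (X : 'M[R]_(d, n))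
    (a a' : 'cV[R]_d) (b b' : 'cV[R]_m) :
  rank1_argmin A X a b -> frob2 (A - b *m a^T *m X) <= frob2 (A - b' *m a'^T *m X).
Proof. by move=> /(_ a' b'); rewrite ler_pM2l ?invr_gt0 // !frob_sqr. Qed.

Lemma rank1_argmin_step m d n j (W : 'M[R]_(m, d)) (X : 'M[R]_(d, n))
    (a : 'cV[R]_d) (b : 'cV[R]_m) (Q : 'M[R]_(m, 1 + j)) :
  rank1_argmin (W *m X) X a b -> Q^T *m Q = 1%:M ->
  exists2 Q' : 'M[R]_(m, j), Q'^T *m Q' = 1%:M &
    frob ((1%:M - Q' *m Q'^T) *m (W *m X - b *m a^T *m X))
      <= frob ((1%:M - Q *m Q^T) *m (W *m X)).
Proof.
move=> opt QQ; have [q [Q' [qq Q'Q' Q'b splitQ]]] := orthonormal_split b QQ.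
exists Q' => //; set A := W *m X.
have Q'A : Q'^T *m (A - b *m a^T *m X) = Q'^T *m A.
  by rewrite mulmxBr !mulmxA Q'b !mul0mx subr0.
have := rank1_argmin_frob2 (W^T *m q) q opt.
have -> : A - q *m (W^T *m q)^T *m X = (1%:M - q *m q^T) *m A.
  by rewrite mulmxBl mul1mx trmx_mul trmxK !mulmxA.
rewrite ler_frob !frob2_proj // Q'A splitQ; lra.
Qed.

End RankOneStep.

Lemma residE (R : realType) m d n (Y : 'M[R]_(m, n)) (X : 'M[R]_(d, n)) a b k :
  resid Y X a b k = Y - \sum_(1 <= i < k.+1) b i *m (a i)^T *m X.
Proof.
elim: k => [|k IH] /=; first by rewrite big_geq // subr0.
by rewrite IH [in RHS]big_nat_recr //= opprD addrA.
Qed.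

Lemma delta_norm_ge0 (R : realType) d m (a abar : nat -> 'cV[R]_d)
    (b bbar : nat -> 'cV[R]_m) k :
  0 <= delta_norm a abar b bbar k.
Proof. by rewrite /delta_norm; case: ifP => // _; apply: frob_ge0. Qed.

Section InexactSequentialLowRank.
Variables (R : realType) (m d n r : nat) (W : 'M[R]_(m, d)) (X : 'M[R]_(d, n)).
Variables (s sX : nat -> R) (a abar : nat -> 'cV[R]_d) (b bbar : nat -> 'cV[R]_m).
Hypotheses (WXs : svals (W *m X) s) (Xs : svals X sX).
Hypothesis le_r_rank : (r <= \rank (W *m X))%N.
Hypothesis opt : forall k, (1 <= k <= r)%N ->
  rank1_argmin (resid (W *m X) X a b k.-1) X (abar k) (bbar k).

Local Notation res := (resid (W *m X) X a b).
Local Notation dn := (delta_norm a abar b bbar).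
Local Notation tail := (\sum_(r.+1 <= k < (\rank (W *m X)).+1) s k).

Lemma resid_proj_step i j (Q : 'M[R]_(m, j.+1)) :
  (i < r)%N -> Q^T *m Q = 1%:M ->
  exists2 Q' : 'M[R]_(m, j), Q'^T *m Q' = 1%:M &
    frob ((1%:M - Q' *m Q'^T) *m res i.+1)
      <= frob ((1%:M - Q *m Q^T) *m res i) + sX 1%N * dn i.+1.
Proof.
move=> lt_ir QQ.
have resE : res i = (W - \sum_(1 <= k < i.+1) b k *m (a k)^T) *m X.
  by rewrite residE mulmxBl mulmx_suml.
have opt_i : rank1_argmin ((W - \sum_(1 <= k < i.+1) b k *m (a k)^T) *m X) X
    (abar i.+1) (bbar i.+1) by rewrite -resE; apply: (@opt i.+1).
have [Q' Q'Q' le_Q'] := rank1_argmin_step opt_i QQ.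
exists Q' => //.
have -> : res i.+1 = (res i - bbar i.+1 *m (abar i.+1)^T *m X)
    - (b i.+1 *m (a i.+1)^T - bbar i.+1 *m (abar i.+1)^T) *m X.
  by rewrite /= mulmxBl opprB addrA subrK.
rewrite mulmxBr (le_trans (frobD_le _ _)) // frobN lerD ?resE //.
by rewrite (le_trans (frob_proj_le _ Q'Q')) // (frob_mulmx_le _ Xs).
Qed.

Lemma resid_proj_le i j : (i + j = r)%N ->
  exists2 Q : 'M[R]_(m, j), Q^T *m Q = 1%:M &
    frob ((1%:M - Q *m Q^T) *m res i) <= tail + sX 1%N * \sum_(1 <= k < i.+1) dn k.
Proof.
elim: i j => [|i IH] j ij.
  rewrite add0n in ij; subst j.
  by rewrite [X in _ * X]big_geq // mulr0 addr0; apply: svals_tail_proj.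
have [Q QQ le_Q] := IH j.+1 (etrans (addnS i j) ij).
have lt_ir : (i < r)%N by rewrite -ij leq_addr.
have [Q' Q'Q' le_Q'] := resid_proj_step lt_ir QQ.
exists Q' => //; rewrite [X in _ * X]big_nat_recr //= mulrDr addrA (le_trans le_Q') //.
by rewrite lerD2r.
Qed.

Lemma frob_resid_le : frob (res r) <= tail + sX 1%N * \sum_(1 <= k < r.+1) dn k.
Proof.
have [Q _] := resid_proj_le (addn0 r).
by rewrite thinmx0 mul0mx subr0 mul1mx.
Qed.

End InexactSequentialLowRank.

Lemma Tstar_ge0 (R : realType) (s : nat -> R) p k : 0 <= s k -> 0 <= Tstar s p k.
Proof.
move=> sk_ge0; rewrite /Tstar; elim/big_ind: _ => // x y x_ge0 y_ge0.
by rewrite le_min x_ge0.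
Qed.

Lemma err_sum_ge_last (R : realType) (dn s : nat -> R) T K :
  (forall k, 0 <= dn k) -> (forall j, (0 < j)%N -> 0 <= s j) -> 0 <= T ->
  dn K <= err_sum dn s T K.+1.
Proof.
move=> dn_ge0 s_ge0 T_ge0; rewrite /err_sum big_nat_recr //=.
rewrite [X in dn K * X]big_geq // mulr1 lerDr.
rewrite big_seq; apply: sumr_ge0 => k _; rewrite mulr_ge0 // big_seq.
apply: prodr_ge0 => j; rewrite mem_index_iota => /andP[lt_kj _].
by rewrite addr_ge0 // mulr_ge0 ?invr_ge0 // mulr_ge0 // s_ge0 // (leq_ltn_trans _ lt_kj).
Qed.

Theorem theorem1 (R : realType) (m d n : nat)
  (X : 'M[R]_(d, n)) (Wstar : 'M[R]_(m, d))
  (sig : nat -> R) (sX : nat -> R) (p r : nat)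
  (a abar : nat -> 'cV[R]_d) (b bbar : nat -> 'cV[R]_m) :
  svals (Wstar *m X) sig ->
  svals X sX ->
  p = \rank (Wstar *m X) ->
  (1 <= r)%N -> (r <= p)%N ->
  (forall k, (1 <= k <= r)%N ->
     rank1_argmin (resid (Wstar *m X) X a b k.-1) X (abar k) (bbar k)) ->
  (forall k, (1 <= k <= r)%N -> 0 < delta_norm a abar b bbar k) ->
  (forall k j, (1 <= k <= r)%N -> (k < j <= p)%N ->
     sX 1%N * err_sum (delta_norm a abar b bbar) sig (Tstar sig p k) k
       < 2^-1 * `|sig k - sig j|) ->
  frob (Wstar *m X - \sum_(1 <= k < r.+1) b k *m (a k)^T *m X)
    <= \sum_(r.+1 <= k < p.+1) sig k
       + sX 1%N * \sum_(1 <= k < r.+1)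
           err_sum (delta_norm a abar b bbar) sig (Tstar sig p k) k.+1.
Proof.
move=> WXs Xs -> _ le_r_rank opt _ _.
rewrite -residE (le_trans (frob_resid_le WXs Xs le_r_rank opt)) // lerD2l.
rewrite ler_wpM2l ?(svals_ge0 Xs) //; apply: ler_sum_nat => k /andP[k_gt0 _].
apply: err_sum_ge_last => [?|?|]; first exact: delta_norm_ge0.
  exact: svals_ge0 WXs.
exact/Tstar_ge0/(svals_ge0 WXs).
Qed.
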